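(* Let $n\ge 2$ and let $b\ge 0$ be an integer, with $b'=\lfloor b/2\rfloor$. Let $P(b)$ be the number of $n$-tuples $(x_1,\dots,x_n)$ of non-negative integers with $x_1+x_2+\cdots+x_{n-1}+2x_n=b$. Then $$P(b)=\sum_{k=0}^{\lfloor (n-1)/2\rfloor}\binom{n-1}{2k}\, C(b'-k+1;\,n-1)\quad\text{if } b \text{ is even},$$ $$P(b)=\sum_{k=0}^{\lfloor (n-2)/2\rfloor}\binom{n-1}{2k+1}\, C(b'-k+1;\,n-1)\quad\text{if } b \text{ is odd}.$$
   Context: For an integer $m$, $C(m;n-1)=\frac{1}{(n-1)!}\,m(m+1)\cdots(m+n-2)$ if $m>0$, and $C(m;n-1)=0$ otherwise. $\binom{n-1}{j}$ denotes the usual binomial coefficient. *)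

From mathcomp Require Import all_boot all_algebra.
Set Implicit Arguments. Unset Strict Implicit. Unset Printing Implicit Defensive.

(* C(m; n-1) = m(m+1)...(m+n-2)/(n-1)! for integer m > 0, and 0 otherwise.
   Here [r] plays the role of n-1. *)
Definition Cpoch (m : int) (r : nat) : nat :=
  match m with
  | Posz (S _ as k) => (\prod_(i < r) (k + i)) %/ r`!
  | _ => 0
  end.

(* P(b): number of n-tuples of non-negative integers (x_0,...,x_{n-1}) with
   x_0 + ... + x_{n-2} + 2 x_{n-1} = b.  Each x_i <= b, so tuples are
   taken in 'I_b.+1 without loss. *)
Definition Pcount (n b : nat) : nat :=
  #|[set x : {ffun 'I_n -> 'I_b.+1} |
     \sum_(i < n) (if val i == n.-1 then 2 else 1) * val (x i) == b]|.

(* P(b) is the coefficient of x^b in (1-x)^-(n-1) (1-x^2)^-1 = (1+x)^(n-1) (1-x^2)^-n,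
   i.e. sum_s C(n-1, s) [b - s even] C((b-s)/2 + n-1, n-1); grouping the
   indices s by parity gives the two formulas, because
   C(b'-k+1; n-1) = C(b'-k+n-1, n-1).  Instead of power series we use that
   these coefficients [pcoef] obey the recurrence of a multiplication by
   1/(1-x) (Pascal's rule), and read P(b) off a product of truncated
   geometric polynomials. *)

From mathcomp Require Import all_boot all_algebra zify.
Set Implicit Arguments. Unset Strict Implicit. Unset Printing Implicit Defensive.

Lemma sum_binS_mul (r N : nat) (F : nat -> nat) :
  \sum_(0 <= s < N.+1) 'C(r.+1, s) * F s =
  \sum_(0 <= s < N.+1) 'C(r, s) * F s + \sum_(0 <= s < N) 'C(r, s) * F s.+1.
Proof.
rewrite !big_nat_recl // !bin0 -addnA; congr (_ + _).
by rewrite -big_split; apply: eq_bigr => s _; rewrite binS mulnDl.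
Qed.

Lemma sum_nat_widen0 (F : nat -> nat) n1 n2 : n1 <= n2 ->
  (forall i, n1 <= i < n2 -> F i = 0) ->
  \sum_(0 <= i < n1) F i = \sum_(0 <= i < n2) F i.
Proof.
move=> le_n12 F0; rewrite [RHS](@big_cat_nat _ _ _ n1) //=.
by rewrite [X in _ = _ + X]big1_seq ?addn0 // => i /andP[_]; rewrite mem_index_iota => /F0.
Qed.

Lemma sum_nat_even_odd (F : nat -> nat) K :
  \sum_(0 <= s < K.*2) F s = \sum_(0 <= k < K) (F (2 * k) + F (2 * k).+1).
Proof.
elim: K => [|K IHK]; first by rewrite !big_geq.
by rewrite doubleS !big_nat_recr //= IHK addnA mul2n.
Qed.

Lemma prod_rising j r : \prod_(i < r) (j.+1 + i) = 'C(j + r, r) * r`!.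
Proof.
rewrite bin_ffact ffact_prod -(big_mkord xpredT) big_rev_mkord subn0.
apply: eq_bigr => i _; have := ltn_ord i; lia.
Qed.

(* [x^(m-s)] (1-x^2)^-(r+1); the test [s <= m] guards the truncated subtraction. *)
Definition even_coef (r m s : nat) : nat :=
  if s <= m then ~~ odd (m - s) * 'C((m - s)./2 + r, r) else 0.

(* [x^m] (1+x)^r (1-x^2)^-(r+1) *)
Definition pcoef (r m : nat) : nat := \sum_(0 <= s < m.+1) 'C(r, s) * even_coef r m s.

Lemma even_coefSS r m s : even_coef r.+1 m.+1 s = even_coef r m.+1 s + even_coef r.+1 m s.+1.
Proof.
rewrite /even_coef; case: (ltngtP s m) => [ltsm|ltms|->].
- have -> : m.+1 - s = (m - s.+1).+2 by lia.
  have -> : s <= m.+1 by lia.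
  rewrite /=.
  by case: (odd _); rewrite //= !mul1n !addSn addnS binS addnC.
- case: ifP => // _; have -> : m.+1 - s = 0 by lia.
  by rewrite /= !add0n !binn.
- by rewrite subSnn; case: ifP.
Qed.

Lemma even_coef_shift r m s : even_coef r m.+1 s.+1 = even_coef r m s.
Proof. by rewrite /even_coef subSS ltnS. Qed.

Lemma even_coef_double r c k (e e' : bool) :
  even_coef r (2 * c + e) (2 * k + e') =
  if e == e' then (if k <= c then 'C(c - k + r, r) else 0) else 0.
Proof.
rewrite /even_coef; case: leqP => [le_sm|lt_ms]; last first.
  by case: eqP => // eq_e; case: leqP => //; move: lt_ms; rewrite eq_e; lia.
rewrite oddB // !mul2n !oddD !odd_double /=.
case: e e' le_sm => [] [] /= le_sm; rewrite ?addn0 ?addn1 ?subSS -?doubleB ?doubleK //.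
all: by rewrite mul1n ifT //; lia.
Qed.

Lemma pcoefSS r m : pcoef r.+1 m.+1 = pcoef r m.+1 + pcoef r.+1 m.
Proof.
rewrite /pcoef sum_binS_mul.
under eq_bigr do rewrite even_coefSS mulnDr.
rewrite big_split /= -addnA; congr (_ + _).
under [X in _ + X]eq_bigr do rewrite even_coef_shift.
rewrite sum_binS_mul addnC; congr (_ + _).
by rewrite !big_nat_recr //= /even_coef ltnn ltnNge leqnSn !muln0 !addn0.
Qed.

Lemma pcoef0 m : pcoef 0 m = (2 %| m).
Proof.
rewrite /pcoef big_nat_recl // big1_seq => [|s _]; last by rewrite bin0n.
by rewrite /even_coef subn0 !bin0 dvdn2 addn0 mul1n muln1.
Qed.

Lemma pcoef_r0 r : pcoef r 0 = 1.
Proof. by rewrite /pcoef big_nat1 /even_coef /= bin0 add0n binn. Qed.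

Lemma pcoefS r m : pcoef r.+1 m = \sum_(j < m.+1) pcoef r (m - j).
Proof.
elim: m => [|m IHm]; first by rewrite big_ord1 !pcoef_r0.
rewrite pcoefSS big_ord_recl subn0 IHm; congr (_ + _).
Qed.

Section TruncatedGeometricSeries.
Import GRing.Theory Num.Theory.
Local Open Scope ring_scope.

Definition geom_trunc (b d : nat) : {poly int} := \sum_(j < b.+1) 'X^(d * j).

Lemma coef_geom_trunc b d m :
  (0 < d)%N -> (m <= d * b)%N -> (geom_trunc b d)`_m = (d %| m)%N%:R.
Proof.
move=> d_gt0 le_m_db; rewrite /geom_trunc coef_sum.
under eq_bigr do rewrite coefXn.
have [/dvdnP[q def_m]|ndvd] := boolP (d %| m)%N; last first.
  rewrite big1 // => j _; case: eqP => // eq_m.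
  by move: ndvd; rewrite eq_m dvdn_mulr.
have lt_q_b1 : (q < b.+1)%N.
  by rewrite ltnS -(leq_pmul2r d_gt0) -def_m mulnC.
rewrite (bigD1 (Ordinal lt_q_b1)) //= def_m mulnC eqxx big1 ?addr0 // => j ne_jq.
by move: ne_jq; rewrite eqn_pmul2l // -val_eqE eq_sym => /negbTE ->.
Qed.

Lemma coef_geom_trunc_exp b r m : (m <= b)%N ->
  ((geom_trunc b 1) ^+ r * geom_trunc b 2)`_m = (pcoef r m)%:R.
Proof.
elim: r m => [|r IHr] m le_mb.
  by rewrite expr0 mul1r pcoef0 coef_geom_trunc //; lia.
rewrite exprS -mulrA coefM pcoefS natr_sum; apply: eq_bigr => j _.
rewrite coef_geom_trunc ?dvd1n ?mul1r ?IHr //; have := ltn_ord j; lia.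
Qed.

Lemma Pcount_coef n b : (Pcount n b)%:R =
  (\prod_(i < n) geom_trunc b (if val i == n.-1 then 2 else 1))`_b.
Proof.
rewrite bigA_distr_bigA /= coef_sum /Pcount -sum1_card big_mkcond natr_sum /=.
by apply: eq_bigr => x _; rewrite prodrXr coefXn inE eq_sym; case: eqP.
Qed.

Lemma Pcount_pcoef r b : Pcount r.+1 b = pcoef r b.
Proof.
apply/eqP; rewrite -(@eqr_nat int) Pcount_coef big_ord_recr /= eqxx.
under eq_bigr do rewrite ltn_eqF //.
by rewrite prodr_const card_ord coef_geom_trunc_exp.
Qed.

End TruncatedGeometricSeries.

Lemma Cpoch_sub_add1 c k r :
  Cpoch (c%:Z - k%:Z + 1)%R r = if k <= c then 'C(c - k + r, r) else 0.
Proof.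
case: leqP => [le_kc|lt_ck].
  have -> : (c%:Z - k%:Z + 1)%R = Posz (c - k).+1 by lia.
  by rewrite /Cpoch prod_rising mulnK // fact_gt0.
have : (c%:Z - k%:Z + 1 <= 0)%R by lia.
by case: (c%:Z - k%:Z + 1)%R => [[|m]|m].
Qed.

Lemma pcoef_double_add r c (e : bool) :
  pcoef r (2 * c + e) = \sum_(0 <= k < (r - e)./2 + 1)
    'C(r, 2 * k + e) * (if k <= c then 'C(c - k + r, r) else 0).
Proof.
set N := c + r + 1.
rewrite /pcoef (@sum_nat_widen0 _ _ N.*2); [|lia|]; last first.
  by move=> s /andP[lt_ms _]; rewrite /even_coef leqNgt lt_ms muln0.
rewrite sum_nat_even_odd (@sum_nat_widen0 _ ((r - e)./2 + 1) N); [|lia|]; last first.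
  by move=> k /andP[le_k _]; rewrite bin_small ?mul0n //; lia.
apply: eq_bigr => k _.
have := even_coef_double r c k e false; have := even_coef_double r c k e true.
rewrite /= addn0 addn1 => -> ->.
by case: e; rewrite /= ?addn0 ?addn1 ?muln0 ?add0n ?addn0.
Qed.

Theorem mainTheorem4 (n b : nat) (hn : 2 <= n) :
  let b' := b./2 in
  (~~ odd b -> Pcount n b =
     \sum_(0 <= k < (n - 1)./2 + 1)
        'C(n - 1, 2 * k) * Cpoch (b'%:Z - k%:Z + 1)%R (n - 1)) /\
  (odd b -> Pcount n b =
     \sum_(0 <= k < (n - 2)./2 + 1)
        'C(n - 1, 2 * k + 1) * Cpoch (b'%:Z - k%:Z + 1)%R (n - 1)).
Proof.
move=> b'; have [r ->] : exists r, n = r.+1 by exists n.-1; lia.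
have def_b : b = 2 * b' + odd b by rewrite mul2n addnC odd_double_half.
rewrite Pcount_pcoef [in pcoef r b]def_b pcoef_double_add !subSS !subn0.
split=> [/negbTE|] -> /=; rewrite ?subn0; apply: congr_big => // k _.
all: by rewrite Cpoch_sub_add1 ?addn0.
Qed.
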